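(* Let $(V,\nu)$ be a matrix gauge space with $\mathbb{C}$-proper matrix gauge, let $(\tilde V,u)$ be its unitization with accretive cones $\tilde V_{ac}^n=\{(A,X)\in M_n(V)\times M_n: u_n(-A,-X)=0\}$, and let $S\subseteq B(K)$ be an operator system with unit $e=I_K$, regarded as a matrix gauge space with the gauge $\nu_e^n(s)=\inf\{t>0:\operatorname{Re}(s)\le t\,e\otimes I_n\}$. If $\phi:V\to S$ is linear and completely gauge contractive (i.e. $\nu_e^n(\phi^{(n)}(A))\le\nu_n(A)$ for all $n$ and $A\in M_n(V)$), then the unital extension $\tilde\phi:\tilde V\to S$, $\tilde\phi(z,\lambda)=\phi(z)+\lambda e$, is real-completely positive, i.e. $\operatorname{Re}(\tilde\phi^{(n)}(A,X))\ge0$ for all $(A,X)\in\tilde V_{ac}^n$.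
   Context: A matrix gauge on a complex vector space $V$ is a sequence $\{\nu_n:M_n(V)\to[0,\infty)\}$ with $\nu_n(x+y)\le\nu_n(x)+\nu_n(y)$, $\nu_n(tx)=t\nu_n(x)$ ($t\ge0$), $\nu_k(X^*AX)\le\|X\|^2\nu_n(A)$ for scalar $X\in M_{n,k}$, and $\nu_{n+m}(A\oplus B)=\max\{\nu_n(A),\nu_m(B)\}$; it is $\mathbb{C}$-proper if $\nu_1(i^kz)=0$ for $k=0,1,2,3$ implies $z=0$. The unitization of $(V,\nu)$ is $\tilde V=V\times\mathbb{C}$ (entrywise operations), with $M_n(\tilde V)$ identified with $M_n(V)\times M_n$, and for $(A,X)\in M_n(\tilde V)$, $u_n(A,X)=\inf\{t>0: X_t\gg0,\ \nu_n(X_t^{-1/2}AX_t^{-1/2})\le1\}$, where $X_t=tI_n-\operatorname{Re}(X)$, $\operatorname{Re}(X)=\frac12(X+X^* )$, and $X_t\gg0$ means $\sigma(X_t)\subset(0,\infty)$; scalar matrices act on $(A,X)$ by $T^*(A,X)T=(T^*AT,T^*XT)$. An operator system is a self-adjoint subspace of $B(K)$ containing $I_K$; $M_n(S)\subseteq B(K^n)$, and $\tilde\phi^{(n)}(A,X)=\phi^{(n)}(A)+e\otimes X$. *)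

(* Complex scalars: an arbitrary C : numClosedFieldType
   (MathComp's abstraction of the complex numbers; ℂ itself is not available). *)
From HB Require Import structures.
From mathcomp Require Import all_boot all_order all_algebra.
Set Implicit Arguments. Unset Strict Implicit. Unset Printing Implicit Defensive.
Import Order.TTheory GRing.Theory Num.Theory.
Local Open Scope ring_scope.

Section Defs.
Variable C : numClosedFieldType.

Definition adjmx m n (X : 'M[C]_(m, n)) : 'M[C]_(n, m) := (map_mx Num.conj X)^T.

Definition spec_pos n (M : 'M[C]_n) : Prop :=
  forall a : C, eigenvalue M a -> 0 < a.

Definition Remx n (X : 'M[C]_n) : 'M[C]_n := 2^-1 *: (X + adjmx X).

Definition is_inv_sqrt n (P M : 'M[C]_n) : Prop :=
  adjmx P = P /\ spec_pos P /\ P *m P *m M = 1%:M.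

Variable V : lmodType C.

(* scalar matrices acting on M_n(V):  T^* A T  for T in M_{n,k} *)
Definition sandwich n k (T : 'M[C]_(n, k)) (A : 'M[V]_n) : 'M[V]_k :=
  \matrix_(i < k, j < k) \sum_(p < n) \sum_(q < n) (((T p i)^* * T q j) *: A p q).

Definition opnorm2_le n k (X : 'M[C]_(n, k)) (c : C) : Prop :=
  forall v : 'cV[C]_k,
    (adjmx (X *m v) *m (X *m v)) ord0 ord0 <= c * (adjmx v *m v) ord0 ord0.

Definition matrix_gauge (nu : forall n, 'M[V]_n -> C) : Prop :=
  (forall n (A : 'M[V]_n), 0 <= nu n A) /\
  (forall n (A B : 'M[V]_n), nu n (A + B) <= nu n A + nu n B) /\
  (forall n (t : C) (A : 'M[V]_n), 0 <= t -> nu n (map_mx (fun v => t *: v) A) = t * nu n A) /\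
  (forall n k (X : 'M[C]_(n, k)) (A : 'M[V]_n) (c : C), 0 <= c ->
      opnorm2_le X c -> nu k (sandwich X A) <= c * nu n A) /\
  (forall n m (A : 'M[V]_n) (B : 'M[V]_m),
      nu (n + m)%N (block_mx A 0 0 B) = Num.max (nu n A) (nu m B)).

Definition C_proper (nu : forall n, 'M[V]_n -> C) : Prop :=
  forall z : V, (forall k : nat, (k < 4)%N -> nu 1%N (const_mx ('i ^+ k *: z)) = 0) -> z = 0.

(* Unitization: u_n(A, X) = inf { t > 0 : X_t >> 0, nu_n(X_t^{-1/2} A X_t^{-1/2}) <= 1 },
   X_t = t I - Re X.  Admissible t : *)
Definition u_adm (nu : forall n, 'M[V]_n -> C) n (A : 'M[V]_n) (X : 'M[C]_n) (t : C) : Prop :=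
  0 < t /\
  let Xt := t%:M - Remx X in
  spec_pos Xt /\ exists P : 'M[C]_n, is_inv_sqrt P Xt /\ nu n (sandwich P A) <= 1.

(* u_n(A, X) = 0  (infimum of a subset of (0,oo) equal to 0) *)
Definition u_zero (nu : forall n, 'M[V]_n -> C) n (A : 'M[V]_n) (X : 'M[C]_n) : Prop :=
  forall eps : C, 0 < eps -> exists t, t < eps /\ u_adm nu A X t.

Definition accretive (nu : forall n, 'M[V]_n -> C) n (A : 'M[V]_n) (X : 'M[C]_n) : Prop :=
  u_zero nu (- A) (- X).

End Defs.

Section OpSys.
Variable C : numClosedFieldType.

Definition inner_product (K : lmodType C) (ip : K -> K -> C) : Prop :=
  (forall (a : C) (x y z : K), ip (a *: x + y) z = a * ip x z + ip y z) /\
  (forall x y : K, ip y x = (ip x y)^*) /\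
  (forall x : K, 0 <= ip x x) /\
  (forall x : K, ip x x = 0 -> x = 0).

Variable K : lmodType C.
Variable ip : K -> K -> C.

Definition lin_op (T : K -> K) : Prop :=
  forall (a : C) (x y : K), T (a *: x + y) = a *: T x + T y.

Definition bounded_op (T : K -> K) : Prop :=
  exists c : C, forall x : K, ip (T x) (T x) <= c * ip x x.

Definition is_adjoint (T T' : K -> K) : Prop :=
  forall x y : K, ip (T x) y = ip x (T' y).

Definition operator_system (S : (K -> K) -> Prop) : Prop :=
  (forall T, S T -> lin_op T /\ bounded_op T) /\
  S (fun x => x) /\
  (forall (a : C) T1 T2, S T1 -> S T2 -> S (fun x => a *: T1 x + T2 x)) /\
  (forall T, S T -> exists T', S T' /\ is_adjoint T T').

Definition qform n (s : 'M[K -> K]_n) (xi : 'I_n -> K) : C :=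
  \sum_(i < n) ip (\sum_(j < n) s i j (xi j)) (xi i).

(* Re(s) <= t (e ⊗ I_n) in B(K^n):  <(t I - Re s) xi, xi> >= 0 for all xi,
   using <Re(s) xi, xi> = Re <s xi, xi>. *)
Definition Re_le n (s : 'M[K -> K]_n) (t : C) : Prop :=
  forall xi : 'I_n -> K, 'Re (qform s xi) <= t * \sum_(i < n) ip (xi i) (xi i).

(* nu_e^n(s) <= c, where nu_e^n(s) = inf { t > 0 : Re(s) <= t e ⊗ I_n } *)
Definition nu_e_le n (s : 'M[K -> K]_n) (c : C) : Prop :=
  forall eps : C, 0 < eps -> exists t, 0 < t /\ t < c + eps /\ Re_le s t.

Definition Re_nonneg n (s : 'M[K -> K]_n) : Prop :=
  forall xi : 'I_n -> K, 0 <= 'Re (qform s xi).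

Variable V : lmodType C.

Definition lin_map (phi : V -> K -> K) : Prop :=
  forall (a : C) (v w : V) (x : K), phi (a *: v + w) x = a *: phi v x + phi w x.

Definition ampl n (phi : V -> K -> K) (A : 'M[V]_n) : 'M[K -> K]_n :=
  \matrix_(i, j) phi (A i j).

Definition unital_ext n (phi : V -> K -> K) (A : 'M[V]_n) (X : 'M[C]_n) : 'M[K -> K]_n :=
  \matrix_(i, j) (fun x => phi (A i j) x + X i j *: x).

End OpSys.

From HB Require Import structures.
From mathcomp Require Import all_boot all_order all_algebra.
From mathcomp Require Import ring.
From Stdlib Require Import FunctionalExtensionality.
Set Implicit Arguments. Unset Strict Implicit. Unset Printing Implicit Defensive.
Import Order.TTheory GRing.Theory Num.Theory.
Local Open Scope ring_scope.

(* Accretivity of (A, X) provides arbitrarily small t > 0 and P = X_t^(-1/2),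
   X_t = t + Re X, with nu(P (-A) P) <= 1.  Complete gauge contractivity gives
   Re phi(P (-A) P) <= (1 + eps) e for every eps > 0.  Since Q = P X_t satisfies
   P Q = 1 and Q^* Q = X_t, evaluating at Q xi yields
   Re <phi(-A) xi, xi> <= <X_t xi, xi> = t |xi|^2 + Re <X xi, xi>,
   and letting t -> 0 gives Re <(phi(A) + e (x) X) xi, xi> >= 0. *)

Lemma ge0_of_forall_addrM_ge0 (F : numFieldType) (x y : F) :
  0 <= y -> (forall e, 0 < e -> 0 <= x + e * y) -> 0 <= x.
Proof.
move=> y0 H; apply/ler_addgt0Pr => e e0.
have y1 : 0 < y + 1 by rewrite ltr_wpDl.
apply: (le_trans (H (e / (y + 1)) _)); first by rewrite divr_gt0.
rewrite lerD2l mulrAC ler_pdivrMr //.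
by apply: ler_wpM2l; [exact: ltW | rewrite lerDl].
Qed.

Section LinearFunctions.
Variables (R : pzRingType) (U W : lmodType R) (f : U -> W).
Hypothesis f_linear : forall a x y, f (a *: x + y) = a *: f x + f y.

Let f_lin : {linear U -> W} := HB.pack f (GRing.isLinear.Build _ _ _ _ f f_linear).

Lemma linfunD x y : f (x + y) = f x + f y. Proof. exact: (linearD f_lin). Qed.
Lemma linfunZ a x : f (a *: x) = a *: f x. Proof. exact: (linearZ_LR f_lin). Qed.
Lemma linfunN x : f (- x) = - f x. Proof. exact: (linearN f_lin). Qed.
Lemma linfun_sum I (r : seq I) (P : pred I) (F : I -> U) :
  f (\sum_(i <- r | P i) F i) = \sum_(i <- r | P i) f (F i).
Proof. exact: (linear_sum f_lin). Qed.
End LinearFunctions.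

Section Adjoint.
Variable C : numClosedFieldType.

Lemma adjmxK n (M : 'M[C]_n) : adjmx (adjmx M) = M.
Proof. by apply/matrixP => i j; rewrite /adjmx !mxE conjCK. Qed.
Lemma adjmxD n (M N : 'M[C]_n) : adjmx (M + N) = adjmx M + adjmx N.
Proof. by apply/matrixP => i j; rewrite /adjmx !mxE rmorphD. Qed.
Lemma adjmxZ n c (M : 'M[C]_n) : adjmx (c *: M) = c^* *: adjmx M.
Proof. by apply/matrixP => i j; rewrite /adjmx !mxE rmorphM. Qed.
Lemma adjmxM m n p (M : 'M[C]_(m, n)) (N : 'M[C]_(n, p)) :
  adjmx (M *m N) = adjmx N *m adjmx M.
Proof.
apply/matrixP => i j; rewrite /adjmx !mxE rmorph_sum; apply: eq_bigr => k _.
by rewrite !mxE rmorphM mulrC.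
Qed.
Lemma adjmx_scalar n (t : C) : t \is Num.real -> adjmx (t%:M : 'M[C]_n) = t%:M.
Proof.
by move=> tR; apply/matrixP => i j; rewrite /adjmx !mxE rmorphMn /= conj_Creal // eq_sym.
Qed.

Lemma RemxN n (X : 'M[C]_n) : Remx (- X) = - Remx X.
Proof.
by rewrite /Remx (_ : adjmx (- X) = - adjmx X) -?opprD ?scalerN // -!scaleN1r adjmxZ rmorphN1.
Qed.
Lemma adjmx_Remx n (X : 'M[C]_n) : adjmx (Remx X) = Remx X.
Proof.
by rewrite /Remx adjmxZ adjmxD adjmxK conj_Creal ?rpredV ?rpred_nat // addrC.
Qed.

Lemma inv_sqrt_factor n (P M : 'M[C]_n) :
  adjmx P = P -> P *m P *m M = 1%:M -> adjmx M = M ->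
  P *m (P *m M) = 1%:M /\ adjmx (P *m M) *m (P *m M) = M.
Proof.
move=> sP PPM sM; split; first by rewrite mulmxA.
by rewrite adjmxM sP sM -mulmxA [P *m _]mulmxA PPM mulmx1.
Qed.
End Adjoint.

Section QuadraticForms.
Variables (C : numClosedFieldType) (K : lmodType C).

Definition mxv n (M : 'M[C]_n) (xi : 'I_n -> K) : 'I_n -> K :=
  fun i => \sum_(j < n) M i j *: xi j.

Lemma mxv_mul n (P Q : 'M[C]_n) (xi : 'I_n -> K) :
  mxv P (mxv Q xi) = mxv (P *m Q) xi.
Proof.
apply: functional_extensionality => i; rewrite /mxv.
under eq_bigr => j _ do rewrite scaler_sumr.
rewrite exchange_big; apply: eq_bigr => k _.
by rewrite mxE scaler_suml; apply: eq_bigr => j _; rewrite scalerA.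
Qed.

Lemma mxv1 n (xi : 'I_n -> K) : mxv 1%:M xi = xi.
Proof.
apply: functional_extensionality => i; rewrite /mxv (bigD1 i) //= mxE eqxx scale1r.
by rewrite big1 ?addr0 // => j /negbTE ji; rewrite mxE eq_sym ji scale0r.
Qed.

Variable ip : K -> K -> C.
Hypothesis ip_inner : inner_product ip.

Let ip_linearl z : forall a x y, ip (a *: x + y) z = a *: (ip x z : C^o) + ip y z.
Proof. by case: ip_inner => H _ a x y; exact: H. Qed.

Lemma ipDl x y z : ip (x + y) z = ip x z + ip y z.
Proof. exact: (@linfunD _ _ C^o _ (ip_linearl z)). Qed.
Lemma ipZl a x z : ip (a *: x) z = a * ip x z.
Proof. exact: (@linfunZ _ _ C^o _ (ip_linearl z)). Qed.
Lemma ip_suml I (r : seq I) (P : pred I) (F : I -> K) z :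
  ip (\sum_(i <- r | P i) F i) z = \sum_(i <- r | P i) ip (F i) z.
Proof. exact: (@linfun_sum _ _ C^o _ (ip_linearl z)). Qed.
Lemma ipC x y : ip y x = (ip x y)^*.
Proof. by case: ip_inner => _ []. Qed.
Lemma ipZr a x z : ip z (a *: x) = a^* * ip z x.
Proof. by rewrite ipC ipZl rmorphM /= -ipC. Qed.
Lemma ip_sumr I (r : seq I) (P : pred I) (F : I -> K) z :
  ip z (\sum_(i <- r | P i) F i) = \sum_(i <- r | P i) ip z (F i).
Proof. by rewrite ipC ip_suml rmorph_sum; apply: eq_bigr => i _ /=; rewrite -ipC. Qed.

Definition ipv n (xi eta : 'I_n -> K) : C := \sum_(i < n) ip (xi i) (eta i).

Lemma ipv_ge0 n (xi : 'I_n -> K) : 0 <= ipv xi xi.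
Proof. by apply: sumr_ge0 => i _; case: ip_inner => _ [_ []]. Qed.

Lemma ipvC n (xi eta : 'I_n -> K) : ipv eta xi = (ipv xi eta)^*.
Proof. by rewrite /ipv rmorph_sum; apply: eq_bigr => i _ /=; rewrite ipC. Qed.

Lemma ipv_mxvl n (M : 'M[C]_n) (xi eta : 'I_n -> K) :
  ipv (mxv M xi) eta = ipv xi (mxv (adjmx M) eta).
Proof.
rewrite /ipv /mxv; under eq_bigr => i _ do rewrite ip_suml.
rewrite exchange_big; apply: eq_bigr => j _; rewrite ip_sumr.
by apply: eq_bigr => i _; rewrite ipZl ipZr /adjmx !mxE conjCK.
Qed.

Lemma ipv_mxvr n (M : 'M[C]_n) (xi eta : 'I_n -> K) :
  ipv xi (mxv M eta) = ipv (mxv (adjmx M) xi) eta.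
Proof. by rewrite ipv_mxvl adjmxK. Qed.

Definition mxform n (M : 'M[C]_n) (xi : 'I_n -> K) : C := ipv (mxv M xi) xi.

Lemma mxformD n (M N : 'M[C]_n) xi : mxform (M + N) xi = mxform M xi + mxform N xi.
Proof.
rewrite /mxform /ipv /mxv -big_split; apply: eq_bigr => i _ /=.
rewrite -ipDl -big_split; congr ip; apply: eq_bigr => j _.
by rewrite mxE scalerDl.
Qed.

Lemma mxformZ n c (M : 'M[C]_n) xi : mxform (c *: M) xi = c * mxform M xi.
Proof.
rewrite /mxform /ipv /mxv mulr_sumr; apply: eq_bigr => i _.
rewrite -ipZl scaler_sumr; congr ip; apply: eq_bigr => j _.
by rewrite mxE scalerA.
Qed.

Lemma mxform1 n (xi : 'I_n -> K) : mxform 1%:M xi = ipv xi xi.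
Proof. by rewrite /mxform mxv1. Qed.

Lemma mxform_adjmx n (M : 'M[C]_n) xi : mxform (adjmx M) xi = (mxform M xi)^*.
Proof. by rewrite /mxform -ipv_mxvr ipvC. Qed.

Lemma mxform_Remx n (M : 'M[C]_n) xi : mxform (Remx M) xi = 'Re (mxform M xi).
Proof. by rewrite /Remx mxformZ mxformD mxform_adjmx ReE mulrC. Qed.

Lemma mxform_adjmxM n (Q : 'M[C]_n) xi :
  mxform (adjmx Q *m Q) xi = ipv (mxv Q xi) (mxv Q xi).
Proof. by rewrite ipv_mxvr mxv_mul. Qed.

Lemma qformE n (s : 'M[K -> K]_n) xi :
  qform ip s xi = ipv (fun i => \sum_(j < n) s i j (xi j)) xi.
Proof. by []. Qed.

Variables (V : lmodType C) (phi : V -> K -> K).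
Hypothesis phi_linear : lin_map phi.
Hypothesis phi_op : forall v, lin_op (phi v).

Let phi_linearl x : forall a v w, phi (a *: v + w) x = a *: phi v x + phi w x.
Proof. by move=> a v w; exact: phi_linear. Qed.
Let phi_linearr v : forall a x y, phi v (a *: x + y) = a *: phi v x + phi v y.
Proof. exact: phi_op. Qed.

Lemma phiZl a v x : phi (a *: v) x = a *: phi v x.
Proof. exact: (@linfunZ _ _ _ (phi^~ x) (phi_linearl x)). Qed.
Lemma phiNl v x : phi (- v) x = - phi v x.
Proof. exact: (@linfunN _ _ _ (phi^~ x) (phi_linearl x)). Qed.
Lemma phi_suml I (r : seq I) (P : pred I) (F : I -> V) x :
  phi (\sum_(i <- r | P i) F i) x = \sum_(i <- r | P i) phi (F i) x.
Proof. exact: (@linfun_sum _ _ _ (phi^~ x) (phi_linearl x)). Qed.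
Lemma phiZr v a x : phi v (a *: x) = a *: phi v x.
Proof. exact: (@linfunZ _ _ _ (phi v) (phi_linearr v)). Qed.
Lemma phi_sumr v I (r : seq I) (P : pred I) (F : I -> K) :
  phi v (\sum_(i <- r | P i) F i) = \sum_(i <- r | P i) phi v (F i).
Proof. exact: (@linfun_sum _ _ _ (phi v) (phi_linearr v)). Qed.

Lemma ampl_sandwich n (P : 'M[C]_n) (A : 'M[V]_n) (eta : 'I_n -> K) :
  (fun i => \sum_(j < n) ampl phi (sandwich P A) i j (eta j)) =
  mxv (adjmx P) (fun i => \sum_(j < n) ampl phi A i j (mxv P eta j)).
Proof.
apply: functional_extensionality => i; rewrite /mxv.
under eq_bigr => j _ do rewrite !mxE phi_suml.
under [RHS]eq_bigr => p _ do rewrite scaler_sumr.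
rewrite exchange_big; apply: eq_bigr => p _.
under eq_bigr => j _ do rewrite phi_suml.
rewrite exchange_big; apply: eq_bigr => q _.
rewrite !mxE phi_sumr scaler_sumr; apply: eq_bigr => j _.
by rewrite phiZl phiZr scalerA.
Qed.

Lemma qform_ampl_sandwich n (P : 'M[C]_n) (A : 'M[V]_n) (eta : 'I_n -> K) :
  qform ip (ampl phi (sandwich P A)) eta = qform ip (ampl phi A) (mxv P eta).
Proof. by rewrite !qformE ampl_sandwich ipv_mxvl adjmxK. Qed.

Lemma qform_amplN n (A : 'M[V]_n) (xi : 'I_n -> K) :
  qform ip (ampl phi (- A)) xi = - qform ip (ampl phi A) xi.
Proof.
rewrite /qform -sumrN; apply: eq_bigr => i _.
rewrite -[RHS]mulN1r -ipZl scaleN1r -sumrN; congr ip; apply: eq_bigr => j _.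
by rewrite !mxE phiNl.
Qed.

Lemma qform_unital_ext n (A : 'M[V]_n) (X : 'M[C]_n) (xi : 'I_n -> K) :
  qform ip (unital_ext phi A X) xi = qform ip (ampl phi A) xi + mxform X xi.
Proof.
rewrite /qform /mxform /ipv /mxv -big_split; apply: eq_bigr => i _ /=.
by rewrite -ipDl -big_split; congr ip; apply: eq_bigr => j _; rewrite !mxE.
Qed.

Lemma Re_le_sandwich_inv_sqrt n (P M : 'M[C]_n) (A : 'M[V]_n) (s : C) :
  adjmx P = P -> P *m P *m M = 1%:M -> adjmx M = M ->
  Re_le ip (ampl phi (sandwich P A)) s ->
  forall xi, 'Re (qform ip (ampl phi A) xi) <= s * mxform M xi.
Proof.
move=> sP PPM sM Re_le_s xi; have [PQ QQ] := inv_sqrt_factor sP PPM sM.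
have : 'Re (qform ip (ampl phi (sandwich P A)) (mxv (P *m M) xi))
       <= s * ipv (mxv (P *m M) xi) (mxv (P *m M) xi) := Re_le_s _.
by rewrite qform_ampl_sandwich mxv_mul PQ mxv1 -mxform_adjmxM QQ.
Qed.

Variable nu : forall n, 'M[V]_n -> C.
Hypothesis phi_contractive : forall n (A : 'M[V]_n), nu_e_le ip (ampl phi A) (@nu n A).

Lemma u_adm_Re_qform_ge0 n (A : 'M[V]_n) (X : 'M[C]_n) t xi :
  u_adm nu (- A) (- X) t ->
  0 <= 'Re (qform ip (ampl phi A) xi) + mxform (t%:M + Remx X) xi.
Proof.
case=> t_gt0 /= [_ [P [[sP [_ PPXt]] nuPA]]].
rewrite RemxN opprK in PPXt.
set Xt := t%:M + Remx X in PPXt *.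
have sXt : adjmx Xt = Xt by rewrite adjmxD adjmx_scalar ?gtr0_real // adjmx_Remx.
have Xt_ge0 : 0 <= mxform Xt xi.
  by have [_ <-] := inv_sqrt_factor sP PPXt sXt; rewrite mxform_adjmxM ipv_ge0.
apply: (ge0_of_forall_addrM_ge0 Xt_ge0) => e e_gt0.
have [s [_ [s_lt Re_le_s]]] := phi_contractive (sandwich P (- A)) e_gt0.
have := Re_le_sandwich_inv_sqrt sP PPXt sXt Re_le_s xi.
rewrite qform_amplN raddfN /= => Re_bound.
have s_le : s * mxform Xt xi <= (1 + e) * mxform Xt xi.
  by rewrite ler_wpM2r // (le_trans (ltW s_lt)) // lerD2r.
set a := 'Re _ in Re_bound *.
have -> : a + mxform Xt xi + e * mxform Xt xi = (1 + e) * mxform Xt xi - - a by ring.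
by rewrite subr_ge0 (le_trans Re_bound).
Qed.
End QuadraticForms.

Theorem lemma6p5 (C : numClosedFieldType) (V : lmodType C)
  (nu : forall n, 'M[V]_n -> C)
  (K : lmodType C) (ip : K -> K -> C) (S : (K -> K) -> Prop)
  (phi : V -> K -> K) :
  matrix_gauge nu -> C_proper nu ->
  inner_product ip -> operator_system ip S ->
  lin_map phi -> (forall v, S (phi v)) ->
  (forall n (A : 'M[V]_n), nu_e_le ip (ampl phi A) (nu n A)) ->
  forall n (A : 'M[V]_n) (X : 'M[C]_n),
    accretive nu A X -> Re_nonneg ip (unital_ext phi A X).
Proof.
move=> _ _ ip_inner S_opsys phi_linear S_phi phi_contractive n A X acc xi.
have phi_op v : lin_op (phi v) by case: S_opsys => S_bounded _; case: (S_bounded _ (S_phi v)).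
rewrite qform_unital_ext // raddfD /= -mxform_Remx //.
apply: (ge0_of_forall_addrM_ge0 (ipv_ge0 ip_inner xi)) => e e_gt0.
have [t [t_lt adm]] := acc e e_gt0.
apply: le_trans (u_adm_Re_qform_ge0 ip_inner phi_linear phi_op phi_contractive xi adm) _.
rewrite mxformD // -scalemx1 mxformZ // mxform1 // [t * _ + _]addrC addrA lerD2l.
by rewrite ler_wpM2r ?ipv_ge0 // ltW.
Qed.
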